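(* Let $\Lambda=(\alpha,\lambda,f)$ be a twisted $S$-module structure on a semilattice of groups $A$ over an inverse semigroup $S$, and consider the extension $A\overset{i}{\to}A*_\Lambda S\overset{j}{\to}S$. Then $\rho(s)=\alpha(ss^{-1})\delta_s$ is a transversal of $j$, and the twisted $S$-module structure induced by $\rho$ is $(\alpha,\lambda',f)$ where $$\lambda'_s(a)=\lambda_s(a)f(s,s^{-1})^{-1}f(s,\alpha^{-1}(aa^{-1}))f(s\alpha^{-1}(aa^{-1}),s^{-1})\quad(s\in S,\ a\in A).$$
   Context: A semilattice of groups is an inverse semigroup $A$ whose idempotents are central; $A_e=\{a: aa^{-1}=a^{-1}a=e\}$. An endomorphism $\varphi$ of $A$ is relatively invertible if there are $\bar\varphi\in\mathrm{End}\,A$, $e_\varphi\in E(A)$ with $\bar\varphi\varphi(a)=e_\varphi a$, $\varphi\bar\varphi(a)=\varphi(e_\varphi)a$, $e_\varphi$ the identity of $\bar\varphi(A)$, $\varphi(e_\varphi)$ the identity of $\varphi(A)$. A twisted $S$-module structure on $A$ is $(\alpha,\lambda,f)$ with $\alpha:E(S)\to E(A)$ an isomorphism, $s\mapsto\lambda_s$ relatively invertible endomorphisms, $f:S\times S\to A$ with $f(s,t)\in A_{\alpha(stt^{-1}s^{-1})}$, satisfying (i) $\lambda_e(a)=\alpha(e)a$ for $e\in E(S)$; (ii) $\lambda_s(\alpha(e))=\alpha(ses^{-1})$; (iii) $\lambda_s\lambda_t(a)=f(s,t)\lambda_{st}(a)f(s,t)^{-1}$; (iv) $f(se,e)=\alpha(ses^{-1})$,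 $f(e,es)=\alpha(ess^{-1})$; (v) $\lambda_s(f(t,u))f(s,tu)=f(s,t)f(st,u)$. The crossed product $A*_\Lambda S=\{a\delta_s: a\in A,s\in S, aa^{-1}=\alpha(ss^{-1})\}$ with $a\delta_s\cdot b\delta_t=a\lambda_s(b)f(s,t)\delta_{st}$ is an inverse semigroup, and with $i(a)=a\delta_{\alpha^{-1}(aa^{-1})}$, $j(a\delta_s)=s$ it is an extension of $A$ by $S$ (i.e. $i$ is a monomorphism, $j$ an idempotent-separating epimorphism, $i(A)=j^{-1}(E(S))$). A transversal of $j$ is $\rho:S\to A*_\Lambda S$ with $j\circ\rho=\mathrm{id}$ and $\rho(E(S))\subseteq E(A*_\Lambda S)$; the structure it induces is $(\alpha_\rho,\lambda_\rho,f_\rho)$ with $\alpha_\rho=i^{-1}\circ\rho|_{E(S)}$, $(\lambda_\rho)_s(a)=i^{-1}(\rho(s)i(a)\rho(s)^{-1})$, and $f_\rho(s,t)$ the unique element of $A_{\alpha_\rho(stt^{-1}s^{-1})}$ with $\rho(s)\rho(t)=i(f_\rho(s,t))\rho(st)$. *)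

Record InvSemigroup := {
  car :> Type;
  smul : car -> car -> car;
  sinv : car -> car;
  smul_assoc : forall x y z, smul x (smul y z) = smul (smul x y) z;
  smul_inv_r : forall x, smul (smul x (sinv x)) x = x;
  smul_inv_l : forall x, smul (smul (sinv x) x) (sinv x) = sinv x;
  idem_comm : forall e f, smul e e = e -> smul f f = f -> smul e f = smul f e
}.

Arguments smul {_} _ _.
Arguments sinv {_} _.

Definition idem {S : InvSemigroup} (e : S) : Prop := smul e e = e.

Definition semilattice_of_groups (A : InvSemigroup) : Prop :=
  forall e a : A, idem e -> smul e a = smul a e.

Definition in_part {A : InvSemigroup} (e a : A) : Prop :=
  smul a (sinv a) = e /\ smul (sinv a) a = e.

Definition endo {A : InvSemigroup} (phi : A -> A) : Prop :=
  forall a b, phi (smul a b) = smul (phi a) (phi b).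

Definition rel_invertible {A : InvSemigroup} (phi : A -> A) : Prop :=
  endo phi /\
  exists (phib : A -> A) (e : A),
    endo phib /\ idem e /\
    (forall a, phib (phi a) = smul e a) /\
    (forall a, phi (phib a) = smul (phi e) a) /\
    (exists b, phib b = e) /\
    (forall a, smul e (phib a) = phib a /\ smul (phib a) e = phib a) /\
    (forall a, smul (phi e) (phi a) = phi a /\ smul (phi a) (phi e) = phi a).

(* alpha : E(S) -> E(A) an isomorphism of semilattices, with inverse alphai;
   both are given as total functions whose values off idempotents are
   irrelevant. *)
Definition alpha_iso {S A : InvSemigroup} (alpha : S -> A) (alphai : A -> S)
  : Prop :=
  (forall e : S, idem e -> idem (alpha e) /\ alphai (alpha e) = e) /\
  (forall a : A, idem a -> idem (alphai a) /\ alpha (alphai a) = a) /\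
  (forall e f : S, idem e -> idem f ->
     alpha (smul e f) = smul (alpha e) (alpha f)).

Definition twisted_module {S A : InvSemigroup}
  (alpha : S -> A) (alphai : A -> S) (lam : S -> A -> A) (f : S -> S -> A)
  : Prop :=
  alpha_iso alpha alphai /\
  (forall s, rel_invertible (lam s)) /\
  (forall s t, in_part (alpha (smul (smul s t) (smul (sinv t) (sinv s)))) (f s t)) /\
  (forall (e : S) (a : A), idem e -> lam e a = smul (alpha e) a) /\
  (forall (s e : S), idem e -> lam s (alpha e) = alpha (smul (smul s e) (sinv s))) /\
  (* (iii) *)
  (forall (s t : S) (a : A),
     lam s (lam t a) = smul (smul (f s t) (lam (smul s t) a)) (sinv (f s t))) /\
  (* (iv) *)
  (forall (s e : S), idem e ->
     f (smul s e) e = alpha (smul (smul s e) (sinv s)) /\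
     f e (smul e s) = alpha (smul (smul e s) (sinv s))) /\
  (forall s t u : S,
     smul (lam s (f t u)) (f s (smul t u)) = smul (f s t) (f (smul s t) u)).

(* The crossed product A *_Lambda S, as the set of pairs (a, s) = a delta_s
   with a a^{-1} = alpha(s s^{-1}), with its multiplication. *)
Definition cp_set {S A : InvSemigroup} (alpha : S -> A) (x : A * S) : Prop :=
  smul (fst x) (sinv (fst x)) = alpha (smul (snd x) (sinv (snd x))).

Definition cp_mul {S A : InvSemigroup} (lam : S -> A -> A) (f : S -> S -> A)
  (x y : A * S) : A * S :=
  (smul (smul (fst x) (lam (snd x) (fst y))) (f (snd x) (snd y)),
   smul (snd x) (snd y)).

Definition cp_i {S A : InvSemigroup} (alphai : A -> S) (a : A) : A * S :=
  (a, alphai (smul a (sinv a))).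

Definition cp_j {S A : InvSemigroup} (x : A * S) : S := snd x.

Definition transversal {S A : InvSemigroup} (alpha : S -> A)
  (lam : S -> A -> A) (f : S -> S -> A) (rho : S -> A * S) : Prop :=
  (forall s, cp_set alpha (rho s)) /\
  (forall s, cp_j (rho s) = s) /\
  (forall e : S, idem e -> cp_mul lam f (rho e) (rho e) = rho e).

Definition cp_inverse {S A : InvSemigroup} (alpha : S -> A)
  (lam : S -> A -> A) (f : S -> S -> A) (x y : A * S) : Prop :=
  cp_set alpha y /\
  cp_mul lam f (cp_mul lam f x y) x = x /\
  cp_mul lam f (cp_mul lam f y x) y = y.

(* In a semilattice of groups every [A_e] is a group, so equations inside one
   part can be solved by cancellation.  If [b delta_t] is an inverse of
   [rho s = alpha(ss^-1) delta_s], then [t = s^-1] and the first component of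
   [rho s * y * rho s = rho s] reads [lambda_s(b) f(s,s^-1) = alpha(ss^-1)],
   i.e. [lambda_s(b) = f(s,s^-1)^-1].  Expanding [rho s * i(a) * y] leaves
   [lambda_s(a) f(s,u) lambda_(su)(b) f(su,s^-1)] with [u = alpha^-1(aa^-1)],
   and axiom (iii) for the pair [(s,u)] rewrites [f(s,u) lambda_(su)(b)] as
   [lambda_s(b) f(s,u) = f(s,s^-1)^-1 f(s,u)] up to idempotents.  Axiom (iv)
   collapses the cocycle factors against idempotents, which makes [rho]
   idempotent on [E(S)] and identifies [f_rho] with [f]. *)


Local Infix "**" := smul (at level 40, left associativity).

Ltac anorm := repeat rewrite smul_assoc.
Ltac regroup t := transitivity t; [solve [anorm; reflexivity] |].

Section InverseSemigroup.
Variable T : InvSemigroup.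
Implicit Types a b x y e : T.

Lemma idem_mul_inv a : idem (a ** sinv a).
Proof. unfold idem. rewrite smul_assoc, smul_inv_r. reflexivity. Qed.

Lemma idem_inv_mul a : idem (sinv a ** a).
Proof. unfold idem. rewrite smul_assoc, smul_inv_l. reflexivity. Qed.

Lemma inv_unique a x : a ** x ** a = a -> x ** a ** x = x -> x = sinv a.
Proof.
  intros Hax Hxa. set (y := sinv a).
  assert (Hay : a ** y ** a = a) by apply smul_inv_r.
  assert (Hya : y ** a ** y = y) by apply smul_inv_l.
  assert (Ixa : idem (x ** a))
    by (unfold idem; regroup (x ** a ** x ** a); rewrite Hxa; reflexivity).
  assert (Iya : idem (y ** a))
    by (unfold idem; regroup (y ** a ** y ** a); rewrite Hya; reflexivity).
  assert (Iax : idem (a ** x))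
    by (unfold idem; regroup (a ** x ** a ** x); rewrite Hax; reflexivity).
  assert (Iay : idem (a ** y))
    by (unfold idem; regroup (a ** y ** a ** y); rewrite Hay; reflexivity).
  transitivity (x ** (a ** y ** a) ** x). { rewrite Hay. symmetry. exact Hxa. }
  regroup ((x ** a) ** (y ** a) ** x).
  rewrite (idem_comm _ _ _ Ixa Iya).
  regroup (y ** a ** (x ** a ** x)). rewrite Hxa.
  transitivity (y ** (a ** y ** a) ** x). { rewrite Hay. reflexivity. }
  regroup (y ** ((a ** y) ** (a ** x))). rewrite (idem_comm _ _ _ Iay Iax).
  regroup (y ** (a ** x ** a) ** y). rewrite Hax. exact Hya.
Qed.

Lemma inv_inv a : sinv (sinv a) = a.
Proof. symmetry. apply inv_unique; [apply smul_inv_l | apply smul_inv_r]. Qed.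

Lemma inv_idem e : idem e -> sinv e = e.
Proof. intro He. unfold idem in He. symmetry. apply inv_unique; rewrite !He; reflexivity. Qed.

Lemma inv_mul a b : sinv (a ** b) = sinv b ** sinv a.
Proof.
  symmetry. apply inv_unique.
  - regroup (a ** ((b ** sinv b) ** (sinv a ** a)) ** b).
    rewrite (idem_comm _ _ _ (idem_mul_inv b) (idem_inv_mul a)).
    regroup ((a ** sinv a ** a) ** (b ** sinv b ** b)). rewrite !smul_inv_r. reflexivity.
  - regroup (sinv b ** ((sinv a ** a) ** (b ** sinv b)) ** sinv a).
    rewrite (idem_comm _ _ _ (idem_inv_mul a) (idem_mul_inv b)).
    regroup ((sinv b ** b ** sinv b) ** (sinv a ** a ** sinv a)).
    rewrite !smul_inv_l. reflexivity.
Qed.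

Lemma idem_conj s e : idem e -> idem (s ** e ** sinv s).
Proof.
  intro He. unfold idem in *.
  regroup (s ** (e ** (sinv s ** s)) ** e ** sinv s).
  rewrite (idem_comm _ _ _ He (idem_inv_mul s)).
  regroup ((s ** sinv s ** s) ** (e ** e) ** sinv s). rewrite smul_inv_r, He. reflexivity.
Qed.

Lemma endo_inv (phi : T -> T) a : endo phi -> sinv (phi a) = phi (sinv a).
Proof.
  intro Hphi. symmetry. apply inv_unique; rewrite <- !Hphi; f_equal;
    [apply smul_inv_r | apply smul_inv_l].
Qed.

Lemma endo_part (phi : T -> T) a e :
  endo phi -> a ** sinv a = e -> phi a ** sinv (phi a) = phi e.
Proof. intros Hphi Ha. rewrite endo_inv, <- Hphi, Ha by exact Hphi. reflexivity. Qed.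

Section Clifford.
Hypothesis HT : semilattice_of_groups T.

Lemma mul_inv_comm a : a ** sinv a = sinv a ** a.
Proof.
  assert (Ea : sinv a ** a ** a = a).
  { rewrite (HT _ a (idem_inv_mul a)). regroup (a ** sinv a ** a). apply smul_inv_r. }
  assert (Eb : a ** sinv a ** sinv a = sinv a).
  { rewrite (HT _ (sinv a) (idem_mul_inv a)). regroup (sinv a ** a ** sinv a).
    apply smul_inv_l. }
  transitivity ((sinv a ** a) ** (a ** sinv a)).
  { symmetry. regroup (sinv a ** a ** a ** sinv a). rewrite Ea. reflexivity. }
  rewrite (idem_comm _ _ _ (idem_inv_mul a) (idem_mul_inv a)).
  regroup (a ** sinv a ** sinv a ** a). rewrite Eb. reflexivity.
Qed.

Lemma part_unit_l a e : a ** sinv a = e -> e ** a = a.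
Proof. intros <-. apply smul_inv_r. Qed.

Lemma part_unit_r a e : a ** sinv a = e -> a ** e = a.
Proof.
  intro Ha. rewrite <- (HT _ a); [exact (part_unit_l _ _ Ha) |].
  rewrite <- Ha. apply idem_mul_inv.
Qed.

Lemma part_inv a e : a ** sinv a = e -> sinv a ** sinv (sinv a) = e.
Proof. intro Ha. rewrite inv_inv, <- mul_inv_comm. exact Ha. Qed.

Lemma part_mul x y e f :
  x ** sinv x = e -> y ** sinv y = f -> (x ** y) ** sinv (x ** y) = e ** f.
Proof.
  intros Hx Hy. rewrite inv_mul. regroup (x ** (y ** sinv y) ** sinv x).
  assert (If : idem f) by (rewrite <- Hy; apply idem_mul_inv).
  rewrite Hy, <- (HT _ x If), <- smul_assoc, Hx.
  apply idem_comm; [exact If | rewrite <- Hx; apply idem_mul_inv].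
Qed.

Lemma part_inv_unique x y e :
  x ** sinv x = e -> y ** sinv y = e -> x ** y = e -> y = sinv x.
Proof.
  intros Hx Hy Hxy.
  transitivity ((sinv x ** x) ** y).
  { rewrite <- mul_inv_comm, Hx. symmetry. exact (part_unit_l _ _ Hy). }
  rewrite <- smul_assoc, Hxy. exact (part_unit_r _ _ (part_inv _ _ Hx)).
Qed.

End Clifford.
End InverseSemigroup.

Section TwistedModule.
Variables S A : InvSemigroup.
Hypothesis HA : semilattice_of_groups A.
Variables (alpha : S -> A) (alphai : A -> S) (lam : S -> A -> A) (f : S -> S -> A).
Hypothesis HLam : twisted_module alpha alphai lam f.

Lemma alpha_idem e : idem e -> idem (alpha e).
Proof. intro He. exact (proj1 (proj1 (proj1 HLam) e He)). Qed.

Lemma alphaK e : idem e -> alphai (alpha e) = e.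
Proof. intro He. exact (proj2 (proj1 (proj1 HLam) e He)). Qed.

Lemma alphai_idem a : idem a -> idem (alphai a).
Proof. intro Ha. exact (proj1 (proj1 (proj2 (proj1 HLam)) a Ha)). Qed.

Lemma alphaiK a : idem a -> alpha (alphai a) = a.
Proof. intro Ha. exact (proj2 (proj1 (proj2 (proj1 HLam)) a Ha)). Qed.

Lemma alphaM e e' : idem e -> idem e' -> alpha (e ** e') = alpha e ** alpha e'.
Proof. exact (proj2 (proj2 (proj1 HLam)) e e'). Qed.

Lemma lam_endo s : endo (lam s).
Proof. exact (proj1 (proj1 (proj2 HLam) s)). Qed.

Lemma f_part s t : f s t ** sinv (f s t) = alpha ((s ** t) ** sinv (s ** t)).
Proof.
  rewrite inv_mul. exact (proj1 (proj1 (proj2 (proj2 HLam)) s t)).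
Qed.

Lemma lam_idem e a : idem e -> lam e a = alpha e ** a.
Proof. exact (proj1 (proj2 (proj2 (proj2 HLam))) e a). Qed.

Lemma lam_alpha s e : idem e -> lam s (alpha e) = alpha (s ** e ** sinv s).
Proof. exact (proj1 (proj2 (proj2 (proj2 (proj2 HLam)))) s e). Qed.

Lemma lam_lam s t a : lam s (lam t a) = f s t ** lam (s ** t) a ** sinv (f s t).
Proof. exact (proj1 (proj2 (proj2 (proj2 (proj2 (proj2 HLam))))) s t a). Qed.

Lemma f_idem_r s e : idem e -> f (s ** e) e = alpha (s ** e ** sinv s).
Proof.
  intro He. exact (proj1 (proj1 (proj2 (proj2 (proj2 (proj2 (proj2 (proj2 HLam)))))) s e He)).
Qed.

Lemma f_idem_l e s : idem e -> f e (e ** s) = alpha (e ** s ** sinv s).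
Proof.
  intro He. exact (proj2 (proj1 (proj2 (proj2 (proj2 (proj2 (proj2 (proj2 HLam)))))) s e He)).
Qed.

Lemma f_mul_inv_l s : f (s ** sinv s) s = alpha (s ** sinv s).
Proof.
  pose proof (f_idem_l (s ** sinv s) s (idem_mul_inv _ s)) as Hf.
  rewrite smul_inv_r in Hf. exact Hf.
Qed.

Lemma part_f_inv s : f s (sinv s) ** sinv (f s (sinv s)) = alpha (s ** sinv s).
Proof. rewrite f_part, inv_mul, inv_inv, (idem_mul_inv _ s). reflexivity. Qed.

Lemma lam_part s a e :
  idem e -> a ** sinv a = alpha e -> lam s a ** sinv (lam s a) = alpha (s ** e ** sinv s).
Proof. intros He Ha. rewrite (endo_part _ _ _ _ (lam_endo s) Ha). exact (lam_alpha s e He). Qed.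

Definition cp_rho (s : S) : A * S := (alpha (s ** sinv s), s).

Definition lam_rho (s : S) (a : A) : A :=
  lam s a ** sinv (f s (sinv s)) ** f s (alphai (a ** sinv a))
  ** f (s ** alphai (a ** sinv a)) (sinv s).

Lemma cp_rho_transversal : transversal alpha lam f cp_rho.
Proof.
  split; [| split].
  - intro s. unfold cp_set, cp_rho; simpl.
    rewrite (inv_idem _ _ (alpha_idem _ (idem_mul_inv _ s))).
    exact (alpha_idem _ (idem_mul_inv _ s)).
  - reflexivity.
  - intros e He. unfold cp_mul, cp_rho; simpl.
    rewrite (inv_idem _ _ He), He, lam_idem, (alpha_idem e He) by exact He.
    pose proof (f_idem_r e e He) as Hf. rewrite He, (inv_idem _ _ He), He in Hf.
    rewrite Hf, !(alpha_idem e He). reflexivity.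
Qed.

Lemma cp_rho_idem e : idem e -> cp_rho e = cp_i alphai (alpha e).
Proof.
  intro He. unfold cp_rho, cp_i.
  rewrite (inv_idem _ _ He), He, (inv_idem _ _ (alpha_idem e He)), (alpha_idem e He), alphaK
    by exact He.
  reflexivity.
Qed.

Lemma cp_rho_inverse s b t :
  cp_inverse alpha lam f (cp_rho s) (b, t) ->
  t = sinv s /\ b ** sinv b = alpha (sinv s ** s) /\ lam s b = sinv (f s (sinv s)).
Proof.
  intros [Hset [Hrsr Hyry]].
  unfold cp_set, cp_mul, cp_rho in Hset, Hrsr, Hyry; simpl in Hset, Hrsr, Hyry.
  injection Hrsr as Hfst Hs. injection Hyry as _ Ht.
  assert (Ht' : t = sinv s) by (apply inv_unique; assumption). subst t.
  rewrite inv_inv in Hset.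
  split; [reflexivity | split; [exact Hset |]].
  rewrite (lam_idem (s ** sinv s)), (alpha_idem _ (idem_mul_inv _ s)), f_mul_inv_l in Hfst
    by apply idem_mul_inv.
  set (e := alpha (s ** sinv s)) in Hfst.
  assert (Hb : lam s b ** sinv (lam s b) = e).
  { rewrite (lam_part s b (sinv s ** s) (idem_inv_mul _ s) Hset). unfold e. f_equal.
    regroup (s ** sinv s ** s ** sinv s). rewrite smul_inv_r. reflexivity. }
  pose proof (part_f_inv s) as Hh. fold e in Hh.
  assert (Hbh : lam s b ** f s (sinv s) = e).
  { rewrite <- Hfst. symmetry.
    regroup (e ** lam s b ** (f s (sinv s) ** e ** e)).
    rewrite !(part_unit_r _ HA _ _ Hh), (part_unit_l _ _ _ Hb). reflexivity. }
  rewrite (part_inv_unique _ HA _ _ e Hb Hh Hbh), inv_inv. reflexivity.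
Qed.

Section Conjugation.
Variables (s : S) (a b : A).
Hypothesis Hb_set : b ** sinv b = alpha (sinv s ** s).
Hypothesis Hb_inv : lam s b = sinv (f s (sinv s)).
Let u := alphai (a ** sinv a).
Let E := alpha (s ** u ** sinv s).

Let idem_u : idem u.
Proof. exact (alphai_idem _ (idem_mul_inv _ a)). Qed.

Let part_a : a ** sinv a = alpha u.
Proof. symmetry. exact (alphaiK _ (idem_mul_inv _ a)). Qed.

Let idem_E : idem (s ** u ** sinv s).
Proof. exact (idem_conj _ _ _ idem_u). Qed.

Let su_part : (s ** u) ** sinv (s ** u) = s ** u ** sinv s.
Proof.
  rewrite inv_mul, (inv_idem _ _ idem_u). regroup (s ** (u ** u) ** sinv s).
  rewrite idem_u. reflexivity.
Qed.

Let part_lam_a : lam s a ** sinv (lam s a) = E.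
Proof. exact (lam_part s a u idem_u part_a). Qed.

Let part_f_su : f s u ** sinv (f s u) = E.
Proof. rewrite f_part, su_part. reflexivity. Qed.

Let part_f_su_inv : f (s ** u) (sinv s) ** sinv (f (s ** u) (sinv s)) = E.
Proof.
  rewrite f_part. unfold E. f_equal.
  rewrite !inv_mul, inv_inv, (inv_idem _ _ idem_u).
  regroup ((s ** u ** sinv s) ** (s ** u ** sinv s)). exact idem_E.
Qed.

Let E_below : alpha (s ** sinv s) ** E = E.
Proof.
  unfold E. rewrite <- (alphaM _ _ (idem_mul_inv _ s) idem_E). f_equal.
  regroup ((s ** sinv s ** s) ** u ** sinv s). rewrite smul_inv_r. reflexivity.
Qed.

(* Axiom (iii) with [t = u]: conjugating [lam (su) b] by [f(s,u)] gives
   [lam s (lam u b) = lam s (alpha u ** b)]. *)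
Lemma f_su_lam :
  f s u ** lam (s ** u) b = E ** sinv (f s (sinv s)) ** f s u.
Proof.
  assert (Hsub : lam (s ** u) b ** sinv (lam (s ** u) b) = E).
  { rewrite (lam_part (s ** u) b (sinv s ** s) (idem_inv_mul _ s) Hb_set).
    rewrite inv_mul, (inv_idem _ _ idem_u). unfold E. f_equal.
    regroup ((s ** u ** sinv s) ** (s ** u ** sinv s)). exact idem_E. }
  transitivity (f s u ** lam (s ** u) b ** (sinv (f s u) ** f s u)).
  { rewrite <- (mul_inv_comm _ HA), part_f_su. symmetry.
    regroup (f s u ** (lam (s ** u) b ** E)). rewrite (part_unit_r _ HA _ _ Hsub).
    reflexivity. }
  regroup ((f s u ** lam (s ** u) b ** sinv (f s u)) ** f s u).
  rewrite <- lam_lam, (lam_idem u b idem_u), (lam_endo s), (lam_alpha s u idem_u), Hb_inv.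
  reflexivity.
Qed.

Lemma cp_rho_conj_fst :
  alpha (s ** sinv s) ** lam s a ** f s u ** lam (s ** u) b
  ** f (s ** u) (sinv s) = lam_rho s a.
Proof.
  regroup (alpha (s ** sinv s) ** lam s a
           ** (f s u ** lam (s ** u) b) ** f (s ** u) (sinv s)).
  rewrite f_su_lam.
  regroup ((alpha (s ** sinv s) ** (lam s a ** E)) ** sinv (f s (sinv s))
           ** f s u ** f (s ** u) (sinv s)).
  assert (Hunit : alpha (s ** sinv s) ** lam s a = lam s a).
  { transitivity (alpha (s ** sinv s) ** (E ** lam s a)).
    { rewrite (part_unit_l _ _ _ part_lam_a). reflexivity. }
    rewrite smul_assoc, E_below. exact (part_unit_l _ _ _ part_lam_a). }
  rewrite (part_unit_r _ HA _ _ part_lam_a), Hunit. reflexivity.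
Qed.

Lemma cp_rho_conj_snd : s ** u ** sinv s = alphai (lam_rho s a ** sinv (lam_rho s a)).
Proof.
  assert (Hh' : sinv (f s (sinv s)) ** sinv (sinv (f s (sinv s))) = alpha (s ** sinv s)).
  { exact (part_inv _ HA _ _ (part_f_inv s)). }
  unfold lam_rho; fold u.
  rewrite (part_mul _ HA _ _ _ _ (part_mul _ HA _ _ _ _
            (part_mul _ HA _ _ _ _ part_lam_a Hh') part_f_su) part_f_su_inv).
  assert (IE : idem E) by exact (alpha_idem _ idem_E).
  rewrite (idem_comm _ E _ IE (alpha_idem _ (idem_mul_inv _ s))), E_below, !IE.
  exact (eq_sym (alphaK _ idem_E)).
Qed.

Lemma cp_rho_conj :
  cp_mul lam f (cp_mul lam f (cp_rho s) (cp_i alphai a)) (b, sinv s)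
  = cp_i alphai (lam_rho s a).
Proof.
  unfold cp_mul, cp_rho, cp_i; simpl. fold u.
  f_equal; [exact cp_rho_conj_fst | exact cp_rho_conj_snd].
Qed.

End Conjugation.

Lemma cp_rho_cocycle s t g :
  in_part (alpha (s ** t ** (sinv t ** sinv s))) g ->
  (cp_mul lam f (cp_rho s) (cp_rho t) = cp_mul lam f (cp_i alphai g) (cp_rho (s ** t))
   <-> g = f s t).
Proof.
  intros [Hg _]. rewrite <- inv_mul in Hg. unfold cp_i, cp_mul, cp_rho; simpl.
  rewrite Hg, (alphaK _ (idem_mul_inv _ (s ** t))), (lam_alpha s _ (idem_mul_inv _ t)).
  rewrite <- (alphaM _ _ (idem_mul_inv _ s) (idem_conj _ _ _ (idem_mul_inv _ t))).
  assert (Est : s ** sinv s ** (s ** (t ** sinv t) ** sinv s) = (s ** t) ** sinv (s ** t)).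
  { rewrite inv_mul. regroup ((s ** sinv s ** s) ** t ** sinv t ** sinv s).
    rewrite smul_inv_r. anorm. reflexivity. }
  rewrite Est, (part_unit_l _ _ _ (f_part s t)).
  rewrite lam_idem, (alpha_idem _ (idem_mul_inv _ (s ** t))), f_mul_inv_l
    by apply idem_mul_inv.
  rewrite smul_inv_r, !(part_unit_r _ HA _ _ Hg).
  split; [intro Heq; injection Heq; auto | intros ->; reflexivity].
Qed.

End TwistedModule.

Theorem proposition3p19 (S A : InvSemigroup) (HA : semilattice_of_groups A)
  (alpha : S -> A) (alphai : A -> S) (lam : S -> A -> A) (f : S -> S -> A)
  (HLam : twisted_module alpha alphai lam f) :
  let rho := fun s : S => (alpha (smul s (sinv s)), s) in
  let lam' := fun (s : S) (a : A) =>
    smul (smul (smul (lam s a) (sinv (f s (sinv s))))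
               (f s (alphai (smul a (sinv a)))))
         (f (smul s (alphai (smul a (sinv a)))) (sinv s)) in
  transversal alpha lam f rho /\
  (* alpha_rho = alpha *)
  (forall e : S, idem e -> rho e = cp_i alphai (alpha e)) /\
  (* lambda_rho = lambda' : rho(s) i(a) rho(s)^{-1} = i(lambda'_s(a)) *)
  (forall (s : S) (a : A) (y : A * S),
     cp_inverse alpha lam f (rho s) y ->
     cp_mul lam f (cp_mul lam f (rho s) (cp_i alphai a)) y
       = cp_i alphai (lam' s a)) /\
  (* f_rho = f : f(s,t) is the unique g in A_{alpha(s t t^-1 s^-1)} with
     rho(s) rho(t) = i(g) rho(st) *)
  (forall (s t : S) (g : A),
     in_part (alpha (smul (smul s t) (smul (sinv t) (sinv s)))) g ->
     (cp_mul lam f (rho s) (rho t) = cp_mul lam f (cp_i alphai g) (rho (smul s t))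
      <-> g = f s t)).
Proof.
  intros rho lam'.
  split; [exact (cp_rho_transversal _ _ _ _ _ _ HLam) |].
  split; [exact (cp_rho_idem _ _ _ _ _ _ HLam) |].
  split.
  - intros s a [b t] Hy.
    destruct (cp_rho_inverse _ _ HA _ _ _ _ HLam _ _ _ Hy) as [-> [Hb_set Hb_inv]].
    exact (cp_rho_conj _ _ HA _ _ _ _ HLam s a b Hb_set Hb_inv).
  - exact (cp_rho_cocycle _ _ HA _ _ _ _ HLam).
Qed.
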